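(* Let $I=[a,b]$ be an interval with $|I|<1$, $\gamma>1$, and let $\mathcal{K}:I\to\mathbb{R}$ be continuous and such that there is $C_0>0$ with $|\mathcal{K}(\xi+\tau)+\mathcal{K}(\xi-\tau)-2\mathcal{K}(\xi)|\le C_0\tau\mathcal{Z}_\gamma(\tau)$ for all $\tau\in[0,|I|/2]$ and all $\xi$ with $\xi\pm\tau\in I$. Then $\mathcal{K}\in C^1(I)$, and there exists a constant $C>0$ such that for all $\xi,\eta\in I$, $$|\mathcal{K}'(\xi)-\mathcal{K}'(\eta)|\le C\,\mathcal{P}_\gamma(|\xi-\eta|).$$
   Context: $\mathcal{Z}_\gamma(x)=(\log\frac1x)^{-\gamma}$ for $x\in(0,1)$ and $\mathcal{Z}_\gamma(0)=0$. For $\gamma>1$, $\mathcal{P}_\gamma:(0,1)\to\mathbb{R}$ is $\mathcal{P}_\gamma(x)=\sum_{n=1}^\infty \mathcal{Z}_\gamma(x2^{-n})$, extended by $\mathcal{P}_\gamma(0)=0$. *)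

From Stdlib Require Import Reals Lra.
From Coquelicot Require Import Coquelicot.
Open Scope R_scope.

(* Z_gamma(x) = (log (1/x))^(-gamma) for x in (0,1), and 0 otherwise
   (the paper only uses x in [0,1); Z_gamma(0) = 0). *)
Definition Zg (gamma x : R) : R :=
  if Rlt_dec 0 x then
    (if Rlt_dec x 1 then Rpower (ln (1 / x)) (- gamma) else 0)
  else 0.

Definition Pg (gamma x : R) : R :=
  if Rlt_dec 0 x then Series (fun n : nat => Zg gamma (x / 2 ^ (S n))) else 0.

Definition Icc (a b x : R) : Prop := a <= x <= b.

Definition continuous_on_Icc (a b : R) (f : R -> R) : Prop :=
  forall x, Icc a b x ->
    filterlim f (within (Icc a b) (locally x)) (locally (f x)).

Definition has_derive_on_Icc (a b : R) (f : R -> R) (x l : R) : Prop :=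
  filterlim (fun y => (f y - f x) / (y - x))
    (within (fun y => Icc a b y /\ y <> x) (locally x)) (locally l).

(* The second-difference bound makes consecutive dyadic difference quotients
   [(K (x + h/2^k) - K x) / (h/2^k)] differ by at most [C0/2 Z(|h|/2^(k+1))], and these terms sum
   to [C0/2 P(|h|)]; so the quotients converge to a slope [L(h)] within [C0/2 P(|h|)] of the
   quotient at [h].  [L] is unchanged by [h -> h/2] and by [h -> m h] (a discrete Taylor
   estimate at a small dyadic scale), hence, by continuity of [K], constant on each side of [x];
   the symmetric second difference identifies the two sides.  The common value [K'(x)] satisfies
   [|K(x+t) - K(x) - t K'(x)| <= C0/2 |t| P(|t|)], which yields differentiability, and comparing
   these expansions at [xi] and [eta] yields [|K'(xi) - K'(eta)| <= C0 P(|xi - eta|)].  Finally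
   [P] is finite and vanishes at [0] because [Z(t/2^n) = (ln(1/t) + n ln 2)^(-gamma)] is summable
   for [gamma > 1]. *)

From Stdlib Require Import Reals Lra Lia ZArith.
From Coquelicot Require Import Coquelicot.
Open Scope R_scope.

Lemma exp_le x y : x <= y -> exp x <= exp y.
Proof. intros [H|H]; [left; apply exp_increasing, H | subst; lra]. Qed.

Lemma ln_inv_pos t : 0 < t < 1 -> 0 < ln (1 / t).
Proof.
  intros Ht. rewrite <- ln_1. apply ln_increasing; [lra|].
  unfold Rdiv. rewrite Rmult_1_l, <- Rinv_1. apply Rinv_lt_contravar; lra.
Qed.

Lemma Rabs_div_pow2 h k : Rabs (h / 2 ^ k) = Rabs h / 2 ^ k.
Proof.
  unfold Rdiv. rewrite Rabs_mult, Rabs_inv, (Rabs_pos_eq (2 ^ k)); auto.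
  left; apply pow_lt; lra.
Qed.

Lemma div_pow2_neq0 h k : h <> 0 -> h / 2 ^ k <> 0.
Proof.
  intros Hh. unfold Rdiv. apply Rmult_integral_contrapositive; split; [exact Hh|].
  apply Rinv_neq_0_compat, pow_nonzero; lra.
Qed.

Lemma div_pow2_small c d : 0 < c -> 0 < d -> exists n, c / 2 ^ n < d.
Proof.
  intros Hc Hd. destruct (pow_lt_1_zero (/ 2) ltac:(rewrite Rabs_pos_eq; lra) (d / c)
    ltac:(apply Rdiv_lt_0_compat; lra)) as [N HN].
  exists N. specialize (HN N (le_n N)).
  rewrite Rabs_pos_eq in HN by (apply pow_le; lra). rewrite pow_inv in HN.
  pose proof (pow_lt 2 N ltac:(lra)).
  apply Rmult_lt_reg_r with (/ c); [apply Rinv_0_lt_compat; lra|].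
  replace (c / 2 ^ N * / c) with (/ 2 ^ N) by (field; lra). exact HN.
Qed.

Lemma floor_nat r : 0 <= r -> exists p : nat, INR p <= r < INR p + 1.
Proof.
  intros Hr. destruct (archimed r) as [H1 H2].
  assert (Hz : (0 < up r)%Z) by (apply lt_0_IZR; lra).
  exists (Z.to_nat (up r - 1)).
  rewrite INR_IZR_INZ, Z2Nat.id by lia. rewrite minus_IZR. simpl. lra.
Qed.

Lemma eq_0_of_Rabs_le_eps u : (forall e, 0 < e -> Rabs u <= e) -> u = 0.
Proof.
  intros H. destruct (Req_dec u 0) as [|Hu]; auto.
  assert (0 < Rabs u) by (apply Rabs_pos_lt; auto).
  specialize (H (Rabs u / 2) ltac:(lra)). lra.
Qed.

Lemma series_nonneg_bounded (a : nat -> R) M : (forall n, 0 <= a n) ->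
  (forall N, sum_n a N <= M) -> ex_series a /\ Series a <= M.
Proof.
  intros Ha HM.
  assert (Hinc : forall n, sum_n a n <= sum_n a (S n)).
  { intros n. rewrite sum_Sn. unfold plus; simpl. specialize (Ha (S n)). lra. }
  destruct (ex_finite_lim_seq_incr _ M Hinc HM) as [l Hl].
  assert (Hs : is_series a l) by exact Hl.
  split; [exists l; exact Hs|].
  rewrite (is_series_unique _ _ Hs).
  exact (is_lim_seq_le _ _ l M HM Hl (is_lim_seq_const M)).
Qed.

Lemma Series_nonneg (a : nat -> R) : (forall n, 0 <= a n) -> ex_series a -> 0 <= Series a.
Proof.
  intros Ha Hex. replace 0 with (Series (fun n => 0 * a n)).
  - apply Series_le; auto. intros n; split; [lra | rewrite Rmult_0_l; apply Ha].
  - rewrite Series_scal_l; ring.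
Qed.

Lemma filterlim_within_of_modulus (D : R -> Prop) (f w : R -> R) (x l : R) :
  (forall eps, 0 < eps -> exists d, 0 < d /\ forall t, 0 <= t < d -> w t < eps) ->
  (forall y, D y -> Rabs (f y - l) <= w (Rabs (y - x))) ->
  filterlim f (within D (locally x)) (locally l).
Proof.
  intros Hw Hf. apply filterlim_locally. intros eps.
  destruct (Hw eps (cond_pos eps)) as [d [Hd Hsmall]].
  exists (mkposreal d Hd). intros y Hy HDy.
  eapply Rle_lt_trans; [apply Hf, HDy|]. apply Hsmall.
  split; [apply Rabs_pos | exact Hy].
Qed.

Lemma continuous_on_Icc_eps a b (K : R -> R) y0 : continuous_on_Icc a b K -> Icc a b y0 ->
  forall e, 0 < e -> exists d, 0 < d /\
    forall y, Icc a b y -> Rabs (y - y0) < d -> Rabs (K y - K y0) < e.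
Proof.
  intros HK Hy0 e He.
  destruct (proj1 (filterlim_locally _ _) (HK y0 Hy0) (mkposreal e He)) as [d Hd].
  exists d. split; [apply cond_pos|]. intros y Hy Hyd. exact (Hd y Hyd Hy).
Qed.

(** * The moduli [Zg] and [Pg] *)

Lemma Zg_nonneg g x : 0 <= Zg g x.
Proof.
  unfold Zg, Rpower. destruct (Rlt_dec 0 x); [destruct (Rlt_dec x 1)|]; try lra.
  left; apply exp_pos.
Qed.

Lemma Zg_eq g t : 0 < t < 1 -> Zg g t = Rpower (ln (1 / t)) (- g).
Proof.
  intros [H1 H2]. unfold Zg. destruct (Rlt_dec 0 t); [destruct (Rlt_dec t 1)|]; lra.
Qed.

Lemma Zg_le g s t : 0 < g -> 0 <= s <= t -> t < 1 -> Zg g s <= Zg g t.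
Proof.
  intros Hg Hs Ht. destruct (Req_dec s 0) as [->|Hs0].
  { unfold Zg at 1. destruct (Rlt_dec 0 0); [lra|]. apply Zg_nonneg. }
  rewrite !Zg_eq by lra. unfold Rpower. apply exp_le.
  assert (0 < ln (1 / t)) by (apply ln_inv_pos; lra).
  assert (ln (1 / t) <= ln (1 / s)).
  { apply ln_le; [apply Rdiv_lt_0_compat; lra|].
    unfold Rdiv; rewrite !Rmult_1_l. apply Rinv_le_contravar; lra. }
  assert (ln (ln (1 / t)) <= ln (ln (1 / s))) by (apply ln_le; lra).
  nra.
Qed.

Lemma Zg_div_pow2 g t n : 0 < t < 1 ->
  Zg g (t / 2 ^ n) = Rpower (ln (1 / t) + INR n * ln 2) (- g).
Proof.
  intros Ht. assert (H2 := pow_R1_Rle 2 n ltac:(lra)).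
  rewrite Zg_eq.
  - f_equal. replace (1 / (t / 2 ^ n)) with (2 ^ n * (1 / t)) by (field; lra).
    rewrite ln_mult, ln_pow; try lra. apply Rdiv_lt_0_compat; lra.
  - split; [apply Rdiv_lt_0_compat; lra|].
    apply Rle_lt_trans with t; [|lra].
    unfold Rdiv. rewrite <- (Rmult_1_r t) at 2. apply Rmult_le_compat_l; [lra|].
    rewrite <- Rinv_1. apply Rinv_le_contravar; lra.
Qed.

(* The integral comparison behind the summation of [Z_gamma]:
   [c (g-1) (A+c)^(-g) <= A^(1-g) - (A+c)^(1-g)], from [exp u >= 1 + u] twice. *)
Lemma Rpower_telescope g A c : 1 < g -> 0 < A -> 0 < c ->
  Rpower (A + c) (- g) * (c * (g - 1)) <= Rpower A (1 - g) - Rpower (A + c) (1 - g).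
Proof.
  intros Hg HA Hc. unfold Rpower. set (B := A + c).
  assert (HB : 0 < B) by (unfold B; lra).
  assert (E1 : exp ((1 - g) * ln A) = exp ((1 - g) * ln B) * exp ((1 - g) * (ln A - ln B))).
  { rewrite <- exp_plus. f_equal. ring. }
  assert (E2 : exp ((1 - g) * ln B) = exp (- g * ln B) * B).
  { rewrite <- (exp_ln B) at 3 by lra. rewrite <- exp_plus. f_equal. ring. }
  assert (I1 := exp_ineq1_le ((1 - g) * (ln A - ln B))).
  assert (I2 := exp_ineq1_le (ln (A / B))).
  rewrite exp_ln in I2 by (apply Rdiv_lt_0_compat; lra).
  rewrite ln_div in I2 by lra.
  assert (I3 : (ln A - ln B) * B <= - c).
  { assert (ln A - ln B <= - c / B) by (replace (- c / B) with (A / B - 1) by (unfold B; field; lra); lra).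
    apply Rmult_le_compat_r with (r := B) in H; [|lra].
    replace (- c / B * B) with (- c) in H by (field; lra). lra. }
  rewrite E1, E2. set (e := exp (- g * ln B)).
  assert (0 < e) by apply exp_pos.
  assert (0 <= e * B * (exp ((1 - g) * (ln A - ln B)) - (1 + (1 - g) * (ln A - ln B))))
    by (apply Rmult_le_pos; [apply Rmult_le_pos|]; lra).
  assert (B * ((1 - g) * (ln A - ln B)) >= c * (g - 1)).
  { replace (B * ((1 - g) * (ln A - ln B))) with ((g - 1) * (- ((ln A - ln B) * B))) by ring.
    replace (c * (g - 1)) with ((g - 1) * c) by ring.
    apply Rle_ge, Rmult_le_compat_l; lra. }
  assert (e * B * ((1 - g) * (ln A - ln B)) >= e * (c * (g - 1))).
  { rewrite Rmult_assoc. apply Rle_ge, Rmult_le_compat_l; lra. }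
  nra.
Qed.

Lemma Pg_le_Rpower g t : 1 < g -> 0 < t < 1 ->
  ex_series (fun n => Zg g (t / 2 ^ S n)) /\
  Pg g t <= Rpower (ln (1 / t)) (1 - g) / (ln 2 * (g - 1)).
Proof.
  intros Hg Ht. set (L := ln (1 / t)). set (c := ln 2).
  assert (HL : 0 < L) by (apply ln_inv_pos; lra).
  assert (Hc : 0 < c) by (unfold c; pose proof ln_lt_2; lra).
  assert (Hk : 0 < c * (g - 1)) by (apply Rmult_lt_0_compat; lra).
  assert (Hpart : forall N, sum_n (fun n => Zg g (t / 2 ^ S n)) N * (c * (g - 1))
       <= Rpower L (1 - g) - Rpower (L + INR (S N) * c) (1 - g)).
  { induction N.
    - rewrite sum_O, Zg_div_pow2 by lra. fold L c.
      pose proof (Rpower_telescope g L c Hg HL Hc). simpl INR.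
      replace (L + 1 * c) with (L + c) by ring. lra.
    - rewrite sum_Sn. unfold plus; simpl plus. rewrite Rmult_plus_distr_r.
      rewrite Zg_div_pow2 by lra. fold L c.
      assert (HA : 0 < L + INR (S N) * c)
        by (pose proof (Rmult_le_pos _ _ (pos_INR (S N)) (Rlt_le _ _ Hc)); lra).
      pose proof (Rpower_telescope g (L + INR (S N) * c) c Hg HA Hc).
      replace (L + INR (S (S N)) * c) with (L + INR (S N) * c + c)
        by (rewrite (S_INR (S N)); ring).
      lra. }
  destruct (series_nonneg_bounded (fun n => Zg g (t / 2 ^ S n))
              (Rpower L (1 - g) / (c * (g - 1))) (fun n => Zg_nonneg _ _)) as [Hex Hle].
  { intros N. specialize (Hpart N).
    assert (0 < Rpower (L + INR (S N) * c) (1 - g)) by (unfold Rpower; apply exp_pos).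
    apply Rmult_le_reg_r with (c * (g - 1)); auto.
    unfold Rdiv. rewrite Rmult_assoc, Rinv_l by lra. lra. }
  split; auto. unfold Pg. destruct (Rlt_dec 0 t); [exact Hle | lra].
Qed.

Lemma ex_series_Zg_dyadic g t : 1 < g -> 0 < t < 1 ->
  ex_series (fun n => Zg g (t / 2 ^ S n)).
Proof. intros Hg Ht. exact (proj1 (Pg_le_Rpower g t Hg Ht)). Qed.

Lemma Pg_nonneg g t : 1 < g -> t < 1 -> 0 <= Pg g t.
Proof.
  intros Hg Ht. unfold Pg. destruct (Rlt_dec 0 t); [|lra].
  apply Series_nonneg; [intros; apply Zg_nonneg | apply ex_series_Zg_dyadic; lra].
Qed.

Lemma Pg_le g s t : 1 < g -> 0 <= s <= t -> t < 1 -> Pg g s <= Pg g t.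
Proof.
  intros Hg Hs Ht. unfold Pg at 1. destruct (Rlt_dec 0 s); [|apply Pg_nonneg; lra].
  unfold Pg. destruct (Rlt_dec 0 t); [|lra].
  apply Series_le; [|apply ex_series_Zg_dyadic; lra].
  intros n; split; [apply Zg_nonneg|].
  pose proof (pow_R1_Rle 2 (S n) ltac:(lra)).
  apply Zg_le; try lra.
  - split; [apply Rdiv_le_0_compat; lra|].
    unfold Rdiv; apply Rmult_le_compat_r; [left; apply Rinv_0_lt_compat; lra | lra].
  - apply Rle_lt_trans with t; [|lra].
    unfold Rdiv. rewrite <- (Rmult_1_r t) at 2. apply Rmult_le_compat_l; [lra|].
    rewrite <- Rinv_1. apply Rinv_le_contravar; lra.
Qed.

Lemma Zg_le_Pg_double g t : 1 < g -> 0 <= t -> 2 * t < 1 -> Zg g t <= Pg g (2 * t).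
Proof.
  intros Hg Ht Ht2. destruct (Req_dec t 0) as [->|Ht0].
  { unfold Zg. destruct (Rlt_dec 0 0); [lra|]. apply Pg_nonneg; lra. }
  assert (Hex := ex_series_Zg_dyadic g (2 * t) Hg ltac:(lra)).
  unfold Pg. destruct (Rlt_dec 0 (2 * t)); [|lra].
  rewrite Series_incr_1 by auto.
  replace (2 * t / 2 ^ 1) with t by (simpl; field).
  assert (0 <= Series (fun k => Zg g (2 * t / 2 ^ S (S k)))); [|lra].
  apply Series_nonneg; [intros; apply Zg_nonneg|].
  exact (proj1 (ex_series_incr_1 (fun n => Zg g (2 * t / 2 ^ S n))) Hex).
Qed.

Lemma Pg_small g : 1 < g -> forall eps, 0 < eps ->
  exists d, 0 < d <= 1 /\ forall t, 0 <= t < d -> Pg g t < eps.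
Proof.
  intros Hg eps He. set (c := ln 2).
  assert (Hc : 0 < c) by (unfold c; pose proof ln_lt_2; lra).
  assert (Hk : 0 < c * (g - 1)) by (apply Rmult_lt_0_compat; lra).
  set (e' := eps * (c * (g - 1))).
  assert (He' : 0 < e') by (apply Rmult_lt_0_compat; lra).
  set (M := exp (ln e' / (1 - g))).
  assert (HM : 0 < M) by apply exp_pos.
  exists (Rmin 1 (exp (- M))).
  split; [split; [apply Rmin_pos; [lra | apply exp_pos] | apply Rmin_l]|].
  intros t Ht.
  assert (Ht1 : t < 1) by (pose proof (Rmin_l 1 (exp (- M))); lra).
  assert (Ht2 : t < exp (- M)) by (pose proof (Rmin_r 1 (exp (- M))); lra).
  destruct (Req_dec t 0) as [->|Ht0].
  { unfold Pg. destruct (Rlt_dec 0 0); lra. }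
  destruct (Pg_le_Rpower g t Hg ltac:(lra)) as [_ Hb].
  assert (HL : M < ln (1 / t)).
  { rewrite <- (ln_exp M). apply ln_increasing; [apply exp_pos|].
    assert (exp M * exp (- M) = 1) by (rewrite <- exp_plus, Rplus_opp_r; apply exp_0).
    assert (0 < exp (- M)) by apply exp_pos.
    apply Rmult_lt_reg_r with t; [lra|].
    replace (1 / t * t) with 1 by (field; lra).
    apply Rlt_le_trans with (exp M * exp (- M)); [|lra].
    apply Rmult_lt_compat_l; [apply exp_pos | lra]. }
  assert (HF : Rpower (ln (1 / t)) (1 - g) < e').
  { unfold Rpower. rewrite <- (exp_ln e') by lra. apply exp_increasing.
    assert (ln M < ln (ln (1 / t))) by (apply ln_increasing; lra).
    unfold M in H. rewrite ln_exp in H.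
    assert (ln e' = (1 - g) * (ln e' / (1 - g))) by (field; lra).
    nra. }
  apply Rle_lt_trans with (1 := Hb). fold c.
  apply Rmult_lt_reg_r with (c * (g - 1)); auto.
  unfold Rdiv. rewrite Rmult_assoc, Rinv_l by lra. unfold e' in HF. lra.
Qed.

Lemma Zg_Pg_small g : 1 < g -> forall eps, 0 < eps ->
  exists d, 0 < d <= 1 /\ forall t, 0 <= t < d -> Zg g t < eps /\ Pg g t < eps.
Proof.
  intros Hg eps He. destruct (Pg_small g Hg eps He) as [d [Hd HP]].
  exists (d / 2). split; [lra|]. intros t Ht. split; [|apply HP; lra].
  eapply Rle_lt_trans; [apply Zg_le_Pg_double; lra | apply HP; lra].
Qed.

Lemma scal_Pg_small g C : 1 < g -> 0 < C -> forall eps, 0 < eps ->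
  exists d, 0 < d /\ forall t, 0 <= t < d -> C * Pg g t < eps.
Proof.
  intros Hg HC eps He.
  destruct (Pg_small g Hg (eps / C) ltac:(apply Rdiv_lt_0_compat; lra)) as [d [Hd HP]].
  exists d. split; [lra|]. intros t Ht.
  apply Rmult_lt_reg_r with (/ C); [apply Rinv_0_lt_compat; lra|].
  replace (C * Pg g t * / C) with (Pg g t) by (field; lra). apply HP, Ht.
Qed.

Lemma Icc_convex a b x h l : Icc a b x -> Icc a b (x + h) -> 0 <= l <= 1 ->
  Icc a b (x + l * h).
Proof. unfold Icc. intros H1 H2 H3. destruct (Rle_dec 0 h); split; nra. Qed.

Lemma Icc_div_pow2 a b x h k : Icc a b x -> Icc a b (x + h) -> Icc a b (x + h / 2 ^ k).
Proof.
  intros Hx Hxh. pose proof (pow_R1_Rle 2 k ltac:(lra)).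
  replace (h / 2 ^ k) with (/ 2 ^ k * h) by (field; lra).
  apply Icc_convex; auto. split; [left; apply Rinv_0_lt_compat; lra|].
  rewrite <- Rinv_1. apply Rinv_le_contravar; lra.
Qed.

Lemma Icc_multiple a b x h m j : Icc a b x -> Icc a b (x + INR m * h) -> (j <= m)%nat ->
  Icc a b (x + INR j * h).
Proof.
  intros Hx Hm Hj. destruct m as [|m].
  - replace j with 0%nat by lia. simpl. replace (x + 0 * h) with x by ring. exact Hx.
  - assert (0 < INR (S m)) by (apply lt_0_INR; lia).
    replace (x + INR j * h) with (x + (INR j / INR (S m)) * (INR (S m) * h)) by (field; lra).
    apply Icc_convex; auto. split; [apply Rdiv_le_0_compat; [apply pos_INR | lra]|].
    apply le_INR in Hj. apply Rmult_le_reg_r with (INR (S m)); auto.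
    unfold Rdiv. rewrite Rmult_assoc, Rinv_l by lra. lra.
Qed.

Lemma Rabs_lt_1_of_Icc a b x y : b - a < 1 -> Icc a b x -> Icc a b y -> Rabs (y - x) < 1.
Proof. unfold Icc. intros. apply Rabs_def1; lra. Qed.

Lemma dyadic_multiple_approx h t delta : h <> 0 -> 0 < t * h -> 0 < delta ->
  exists n p lam, 0 <= lam <= 1 /\ INR p * (h / 2 ^ n) = lam * t /\
    Rabs (t - INR p * (h / 2 ^ n)) < delta.
Proof.
  intros Hh Hth Hd.
  destruct (div_pow2_small (Rabs h) delta ltac:(apply Rabs_pos_lt; auto) Hd) as [n Hn].
  pose proof (pow_lt 2 n ltac:(lra)).
  set (u := h / 2 ^ n) in *.
  assert (Hu : u <> 0) by apply div_pow2_neq0, Hh.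
  assert (Hau : Rabs u < delta) by (unfold u; rewrite Rabs_div_pow2; exact Hn).
  set (r := t / u).
  assert (Hr : 0 < r).
  { unfold r, u. replace (t / (h / 2 ^ n)) with (t * h * 2 ^ n / (h * h)) by (field; lra).
    apply Rdiv_lt_0_compat; [apply Rmult_lt_0_compat; lra|].
    destruct (Rlt_dec 0 h); nra. }
  destruct (floor_nat r ltac:(lra)) as [p [Hp1 Hp2]].
  assert (Htr : t = r * u) by (unfold r; field; exact Hu).
  exists n, p, (INR p / r). fold u. split; [|split].
  - split; [apply Rdiv_le_0_compat; [apply pos_INR | lra]|].
    apply Rmult_le_reg_r with r; auto. unfold Rdiv. rewrite Rmult_assoc, Rinv_l by lra. lra.
  - rewrite Htr. field. lra.
  - rewrite Htr. replace (r * u - INR p * u) with ((r - INR p) * u) by ring.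
    rewrite Rabs_mult, (Rabs_pos_eq (r - INR p)) by lra.
    assert (0 < Rabs u) by (apply Rabs_pos_lt; exact Hu). nra.
Qed.

Lemma discrete_taylor (v : nat -> R) B m : 0 <= B ->
  (forall j, (j + 2 <= m)%nat -> Rabs (v (S (S j)) + v j - 2 * v (S j)) <= B) ->
  Rabs (v m - v O - INR m * (v 1%nat - v O)) <= INR m * INR m * B.
Proof.
  intros HB Hv.
  set (dv := fun j => v (S j) - v j).
  assert (Hdv : forall j, (S j <= m)%nat -> Rabs (dv j - dv O) <= INR j * B).
  { induction j as [|j IH]; intros Hj.
    - unfold Rminus at 1. rewrite Rplus_opp_r, Rabs_R0. simpl. lra.
    - replace (dv (S j) - dv O) with ((dv j - dv O) + (v (S (S j)) + v j - 2 * v (S j)))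
        by (unfold dv; ring).
      eapply Rle_trans; [apply Rabs_triang|].
      rewrite S_INR. specialize (IH ltac:(lia)). specialize (Hv j ltac:(lia)). lra. }
  assert (Hsum : forall j, (j <= m)%nat -> Rabs (v j - v O - INR j * dv O) <= INR j * INR j * B).
  { induction j as [|j IH]; intros Hj.
    - replace (v O - v O - INR 0 * dv O) with 0 by (simpl; ring). rewrite Rabs_R0. simpl. lra.
    - replace (v (S j) - v O - INR (S j) * dv O)
        with ((v j - v O - INR j * dv O) + (dv j - dv O)) by (unfold dv; rewrite S_INR; ring).
      eapply Rle_trans; [apply Rabs_triang|].
      specialize (IH ltac:(lia)). specialize (Hdv j Hj).
      rewrite S_INR. pose proof (pos_INR j). nra. }
  exact (Hsum m (le_n m)).
Qed.

(** * Dyadic slopes *)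

Definition diff_quot (K : R -> R) x h := (K (x + h) - K x) / h.

(* The limit of [diff_quot K x (h / 2 ^ k)] as [k] grows, written as a telescoping series
   so that it is defined for every [h]. *)
Definition dyadic_slope (K : R -> R) x h :=
  diff_quot K x h - Series (fun k => diff_quot K x (h / 2 ^ k) - diff_quot K x (h / 2 ^ S k)).

Section Zygmund_second_difference.

Variables (a b g C0 : R) (K : R -> R).
Hypotheses (Hg : 1 < g) (HC0 : 0 < C0) (Hba : b - a < 1).
Hypothesis Hsecond : forall tau xi : R, 0 <= tau <= (b - a) / 2 ->
  Icc a b (xi + tau) -> Icc a b (xi - tau) ->
  Rabs (K (xi + tau) + K (xi - tau) - 2 * K xi) <= C0 * tau * Zg g tau.

Lemma second_diff_Rabs xi tau : Icc a b (xi + tau) -> Icc a b (xi - tau) ->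
  Rabs (K (xi + tau) + K (xi - tau) - 2 * K xi) <= C0 * Rabs tau * Zg g (Rabs tau).
Proof.
  intros H1 H2. unfold Icc in *. destruct (Rle_dec 0 tau).
  - rewrite (Rabs_pos_eq tau) by lra. apply Hsecond; unfold Icc; lra.
  - rewrite (Rabs_left tau) by lra.
    replace (K (xi + tau) + K (xi - tau)) with (K (xi + - tau) + K (xi - - tau))
      by (rewrite Rplus_comm; f_equal; f_equal; ring).
    apply Hsecond; unfold Icc; lra.
Qed.

Lemma diff_quot_halve x h : Icc a b x -> Icc a b (x + h) -> h <> 0 ->
  Rabs (diff_quot K x h - diff_quot K x (h / 2)) <= C0 / 2 * Zg g (Rabs h / 2).
Proof.
  intros Hx Hxh Hh.
  replace (diff_quot K x h - diff_quot K x (h / 2))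
    with ((K (x + h) + K x - 2 * K (x + h / 2)) / h) by (unfold diff_quot; field; exact Hh).
  assert (Hs := second_diff_Rabs (x + h / 2) (h / 2)).
  replace (x + h / 2 + h / 2) with (x + h) in Hs by field.
  replace (x + h / 2 - h / 2) with x in Hs by field.
  replace (Rabs (h / 2)) with (Rabs h / 2) in Hs 
    by (unfold Rdiv; rewrite Rabs_mult, (Rabs_pos_eq (/ 2)) by lra; reflexivity).
  specialize (Hs Hxh Hx).
  assert (0 < Rabs h) by (apply Rabs_pos_lt; exact Hh).
  unfold Rdiv at 1. rewrite Rabs_mult, Rabs_inv.
  apply Rmult_le_reg_r with (Rabs h); auto.
  rewrite Rmult_assoc, Rinv_l, Rmult_1_r by lra.
  replace (C0 / 2 * Zg g (Rabs h / 2) * Rabs h) with (C0 * (Rabs h / 2) * Zg g (Rabs h / 2)) by field.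
  exact Hs.
Qed.

Lemma diff_quot_dyadic_step x h k : Icc a b x -> Icc a b (x + h) -> h <> 0 ->
  Rabs (diff_quot K x (h / 2 ^ k) - diff_quot K x (h / 2 ^ S k))
    <= C0 / 2 * Zg g (Rabs h / 2 ^ S k).
Proof.
  intros Hx Hxh Hh. pose proof (pow_lt 2 k ltac:(lra)).
  replace (h / 2 ^ S k) with (h / 2 ^ k / 2) by (simpl; field; lra).
  replace (Rabs h / 2 ^ S k) with (Rabs (h / 2 ^ k) / 2)
    by (rewrite Rabs_div_pow2; simpl; field; lra).
  apply diff_quot_halve; [exact Hx | apply Icc_div_pow2; auto | apply div_pow2_neq0, Hh].
Qed.

Lemma ex_series_Rabs_dyadic_steps x h : Icc a b x -> Icc a b (x + h) -> h <> 0 ->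
  ex_series (fun k => Rabs (diff_quot K x (h / 2 ^ k) - diff_quot K x (h / 2 ^ S k))).
Proof.
  intros Hx Hxh Hh.
  assert (Hh1 : Rabs h < 1) by (replace h with (x + h - x) by ring; apply (Rabs_lt_1_of_Icc a b); auto).
  assert (Hh0 : 0 < Rabs h) by (apply Rabs_pos_lt, Hh).
  apply (@ex_series_le R_AbsRing R_CompleteNormedModule _
           (fun k => C0 / 2 * Zg g (Rabs h / 2 ^ S k))).
  - intros n. change (Rabs (Rabs (diff_quot K x (h / 2 ^ n) - diff_quot K x (h / 2 ^ S n)))
                        <= C0 / 2 * Zg g (Rabs h / 2 ^ S n)).
    rewrite Rabs_Rabsolu. apply diff_quot_dyadic_step; auto.
  - exact (ex_series_scal_l (C0 / 2) _ (ex_series_Zg_dyadic g (Rabs h) Hg ltac:(lra))).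
Qed.

Lemma diff_quot_sub_dyadic_slope x h : Icc a b x -> Icc a b (x + h) -> h <> 0 ->
  Rabs (diff_quot K x h - dyadic_slope K x h) <= C0 / 2 * Pg g (Rabs h).
Proof.
  intros Hx Hxh Hh.
  assert (Hh1 : Rabs h < 1) by (replace h with (x + h - x) by ring; apply (Rabs_lt_1_of_Icc a b); auto).
  assert (Hh0 : 0 < Rabs h) by (apply Rabs_pos_lt, Hh).
  unfold dyadic_slope.
  match goal with |- context [Series ?d] =>
    replace (diff_quot K x h - (diff_quot K x h - Series d)) with (Series d) by ring end.
  eapply Rle_trans; [apply Series_Rabs, ex_series_Rabs_dyadic_steps; auto|].
  unfold Pg. destruct (Rlt_dec 0 (Rabs h)); [|lra]. rewrite <- Series_scal_l.
  apply Series_le; [|exact (ex_series_scal_l (C0 / 2) _ (ex_series_Zg_dyadic g (Rabs h) Hg ltac:(lra)))].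
  intros n; split; [apply Rabs_pos | apply diff_quot_dyadic_step; auto].
Qed.

Lemma dyadic_slope_halve x h : Icc a b x -> Icc a b (x + h) -> h <> 0 ->
  dyadic_slope K x (h / 2) = dyadic_slope K x h.
Proof.
  intros Hx Hxh Hh. unfold dyadic_slope at 2.
  rewrite Series_incr_1 by (apply ex_series_Rabs, ex_series_Rabs_dyadic_steps; auto).
  replace (h / 2 ^ 0) with h by (simpl; field).
  replace (h / 2 ^ 1) with (h / 2) by (simpl; field).
  unfold dyadic_slope.
  rewrite (Series_ext (fun k => diff_quot K x (h / 2 ^ S k) - diff_quot K x (h / 2 ^ S (S k)))
             (fun k => diff_quot K x (h / 2 / 2 ^ k) - diff_quot K x (h / 2 / 2 ^ S k))).
  - ring.
  - intros n. pose proof (pow_lt 2 n ltac:(lra)).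
    replace (h / 2 ^ S n) with (h / 2 / 2 ^ n) by (simpl; field; lra).
    replace (h / 2 ^ S (S n)) with (h / 2 / 2 ^ S n) by (simpl; field; lra). reflexivity.
Qed.

Lemma dyadic_slope_div_pow2 x h n : Icc a b x -> Icc a b (x + h) -> h <> 0 ->
  dyadic_slope K x (h / 2 ^ n) = dyadic_slope K x h.
Proof.
  intros Hx Hxh Hh. induction n as [|n IH].
  - f_equal. simpl. field.
  - rewrite <- IH. pose proof (pow_lt 2 n ltac:(lra)).
    replace (h / 2 ^ S n) with (h / 2 ^ n / 2) by (simpl; field; lra).
    apply dyadic_slope_halve; [exact Hx | apply Icc_div_pow2; auto | apply div_pow2_neq0, Hh].
Qed.

Lemma diff_quot_multiple x h m : Icc a b x -> Icc a b (x + INR m * h) -> (1 <= m)%nat ->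
  h <> 0 -> Rabs (diff_quot K x (INR m * h) - diff_quot K x h) <= INR m * C0 * Zg g (Rabs h).
Proof.
  intros Hx Hm Hm1 Hh.
  set (B := C0 * Rabs h * Zg g (Rabs h)).
  assert (HB : 0 <= B)
    by (apply Rmult_le_pos; [apply Rmult_le_pos; [lra | apply Rabs_pos] | apply Zg_nonneg]).
  assert (Hsteps : forall j, (j + 2 <= m)%nat ->
    Rabs (K (x + INR (S (S j)) * h) + K (x + INR j * h) - 2 * K (x + INR (S j) * h)) <= B).
  { intros j Hj. assert (Hs := second_diff_Rabs (x + INR (S j) * h) h).
    replace (x + INR (S j) * h + h) with (x + INR (S (S j)) * h) in Hs
      by (rewrite (S_INR (S j)); ring).
    replace (x + INR (S j) * h - h) with (x + INR j * h) in Hs by (rewrite (S_INR j); ring).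
    apply Hs; apply Icc_multiple with m; auto; lia. }
  assert (Htaylor := discrete_taylor (fun j => K (x + INR j * h)) B m HB Hsteps).
  simpl in Htaylor. rewrite Rmult_0_l, Rmult_1_l, Rplus_0_r in Htaylor.
  assert (Hmp : 0 < INR m) by (apply lt_0_INR; lia).
  assert (Hh0 : 0 < Rabs h) by (apply Rabs_pos_lt, Hh).
  replace (diff_quot K x (INR m * h) - diff_quot K x h)
    with ((K (x + INR m * h) - K x - INR m * (K (x + h) - K x)) / (INR m * h))
    by (unfold diff_quot; field; split; lra).
  unfold Rdiv. rewrite Rabs_mult, Rabs_inv, Rabs_mult, (Rabs_pos_eq (INR m)) by lra.
  apply Rmult_le_reg_r with (INR m * Rabs h); [apply Rmult_lt_0_compat; lra|].
  rewrite Rmult_assoc, Rinv_l by (apply Rmult_integral_contrapositive; split; lra).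
  unfold B in Htaylor. nra.
Qed.

Lemma dyadic_slope_multiple_gap x u m : Icc a b x -> Icc a b (x + INR m * u) ->
  (1 <= m)%nat -> u <> 0 ->
  Rabs (dyadic_slope K x (INR m * u) - dyadic_slope K x u)
    <= C0 / 2 * Pg g (INR m * Rabs u) + C0 / 2 * Pg g (Rabs u) + INR m * C0 * Zg g (Rabs u).
Proof.
  intros Hx Hxm Hm Hu.
  assert (Hmp : 1 <= INR m) by (apply (le_INR 1); lia).
  assert (Hxu : Icc a b (x + u)).
  { pose proof (Icc_multiple a b x u m 1 Hx Hxm Hm) as Hi.
    simpl INR in Hi. rewrite Rmult_1_l in Hi. exact Hi. }
  assert (Hmu : INR m * u <> 0) by (apply Rmult_integral_contrapositive; split; lra).
  pose proof (diff_quot_sub_dyadic_slope x (INR m * u) Hx Hxm Hmu) as B1.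
  pose proof (diff_quot_sub_dyadic_slope x u Hx Hxu Hu) as B2.
  pose proof (diff_quot_multiple x u m Hx Hxm Hm Hu) as B3.
  rewrite Rabs_mult, (Rabs_pos_eq (INR m)) in B1 by lra.
  replace (dyadic_slope K x (INR m * u) - dyadic_slope K x u)
    with (- (diff_quot K x (INR m * u) - dyadic_slope K x (INR m * u))
          + (diff_quot K x (INR m * u) - diff_quot K x u)
          + (diff_quot K x u - dyadic_slope K x u)) by ring.
  eapply Rle_trans; [apply Rabs_triang|].
  eapply Rle_trans; [apply Rplus_le_compat_r, Rabs_triang|].
  rewrite Rabs_Ropp. lra.
Qed.

(* Refining [h] and [m h] to the same dyadic scale leaves both slopes unchanged and
   makes their gap arbitrarily small. *)
Lemma dyadic_slope_multiple x h m : Icc a b x -> Icc a b (x + INR m * h) -> (1 <= m)%nat ->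
  h <> 0 -> dyadic_slope K x (INR m * h) = dyadic_slope K x h.
Proof.
  intros Hx Hxm Hm Hh.
  assert (Hmp : 1 <= INR m) by (apply (le_INR 1); lia).
  assert (Hxh : Icc a b (x + h)).
  { pose proof (Icc_multiple a b x h m 1 Hx Hxm Hm) as Hi.
    simpl INR in Hi. rewrite Rmult_1_l in Hi. exact Hi. }
  assert (Hmh : INR m * h <> 0) by (apply Rmult_integral_contrapositive; split; lra).
  apply Rminus_diag_uniq, eq_0_of_Rabs_le_eps. intros e He.
  set (e1 := e / (C0 * (INR m + 1))).
  assert (He1 : 0 < e1) by (apply Rdiv_lt_0_compat; [lra | apply Rmult_lt_0_compat; lra]).
  destruct (Zg_Pg_small g Hg e1 He1) as [d [Hd HZP]].
  assert (Hh0 : 0 < Rabs h) by (apply Rabs_pos_lt, Hh).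
  destruct (div_pow2_small (INR m * Rabs h) d ltac:(nra) ltac:(lra)) as [n Hn].
  pose proof (pow_lt 2 n ltac:(lra)).
  set (u := h / 2 ^ n).
  assert (Hu0 : 0 < Rabs u) by (apply Rabs_pos_lt, div_pow2_neq0, Hh).
  assert (Hmu_small : INR m * Rabs u < d).
  { unfold u. rewrite Rabs_div_pow2.
    replace (INR m * (Rabs h / 2 ^ n)) with (INR m * Rabs h / 2 ^ n) by (field; lra). exact Hn. }
  assert (Hmu : INR m * h / 2 ^ n = INR m * u) by (unfold u; field; lra).
  rewrite <- (dyadic_slope_div_pow2 x (INR m * h) n), <- (dyadic_slope_div_pow2 x h n), Hmu
    by auto.
  fold u. eapply Rle_trans.
  { apply dyadic_slope_multiple_gap; [exact Hx | rewrite <- Hmu; apply Icc_div_pow2; auto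
                                     | exact Hm | apply div_pow2_neq0, Hh]. }
  destruct (HZP (INR m * Rabs u) ltac:(nra)) as [_ P1].
  destruct (HZP (Rabs u) ltac:(nra)) as [Z2 P2].
  assert (Ee : C0 * (INR m + 1) * e1 = e) by (unfold e1; field; lra).
  assert (C0 / 2 * Pg g (INR m * Rabs u) <= C0 / 2 * e1) by (apply Rmult_le_compat_l; lra).
  assert (C0 / 2 * Pg g (Rabs u) <= C0 / 2 * e1) by (apply Rmult_le_compat_l; lra).
  assert (INR m * C0 * Zg g (Rabs u) <= INR m * C0 * e1) by (apply Rmult_le_compat_l; nra).
  nra.
Qed.

Lemma taylor_dyadic_multiple x h n p : Icc a b x -> Icc a b (x + h) -> h <> 0 ->
  Icc a b (x + INR p * (h / 2 ^ n)) ->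
  Rabs (K (x + INR p * (h / 2 ^ n)) - K x - INR p * (h / 2 ^ n) * dyadic_slope K x h)
    <= C0 / 2 * Rabs (INR p * (h / 2 ^ n)) * Pg g (Rabs (INR p * (h / 2 ^ n))).
Proof.
  intros Hx Hxh Hh Hxt. set (t := INR p * (h / 2 ^ n)) in *.
  destruct p as [|p].
  { unfold t. simpl. rewrite !Rmult_0_l, Rplus_0_r, Rabs_R0.
    replace (K x - K x - 0) with 0 by ring. rewrite Rabs_R0. lra. }
  assert (Hu : h / 2 ^ n <> 0) by apply div_pow2_neq0, Hh.
  assert (Ht : t <> 0) by (apply Rmult_integral_contrapositive; split; [apply not_0_INR |]; auto).
  assert (Hslope : dyadic_slope K x h = dyadic_slope K x t).
  { unfold t. rewrite dyadic_slope_multiple by (auto; lia).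
    symmetry. apply dyadic_slope_div_pow2; auto. }
  assert (Ht1 : Rabs t < 1) by (replace t with (x + t - x) by ring; apply (Rabs_lt_1_of_Icc a b); auto).
  pose proof (diff_quot_sub_dyadic_slope x t Hx Hxt Ht) as Hbound.
  rewrite Hslope.
  replace (K (x + t) - K x - t * dyadic_slope K x t)
    with (t * (diff_quot K x t - dyadic_slope K x t)) by (unfold diff_quot; field; exact Ht).
  rewrite Rabs_mult, Rmult_assoc, (Rmult_comm (C0 / 2)), Rmult_assoc.
  apply Rmult_le_compat_l; [apply Rabs_pos | lra].
Qed.

Hypothesis Hcont : continuous_on_Icc a b K.

(* Approximate [t] by a multiple [t'] of [h / 2 ^ n] and pass to the limit using the
   continuity of [K] at [x + t]. *)
Lemma taylor_same_side x h t : Icc a b x -> Icc a b (x + h) -> h <> 0 ->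
  Icc a b (x + t) -> 0 < t * h ->
  Rabs (K (x + t) - K x - t * dyadic_slope K x h) <= C0 / 2 * Rabs t * Pg g (Rabs t).
Proof.
  intros Hx Hxh Hh Hxt Hth.
  set (L := dyadic_slope K x h).
  assert (Ht1 : Rabs t < 1) by (replace t with (x + t - x) by ring; apply (Rabs_lt_1_of_Icc a b); auto).
  apply Rle_plus_epsilon. intros e He.
  destruct (continuous_on_Icc_eps a b K (x + t) Hcont Hxt (e / 2) ltac:(lra)) as [d1 [Hd1 Hc]].
  assert (HL := Rabs_pos L).
  set (delta := Rmin d1 (e / (2 * (Rabs L + 1)))).
  assert (Hdelta : 0 < delta) by (apply Rmin_pos; [lra | apply Rdiv_lt_0_compat; lra]).
  destruct (dyadic_multiple_approx h t delta Hh Hth Hdelta) as [n [p [lam [Hlam [Ht' Hclose]]]]].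
  set (t' := INR p * (h / 2 ^ n)) in *.
  assert (Hxt' : Icc a b (x + t')) by (rewrite Ht'; apply Icc_convex; auto).
  assert (Habs' : Rabs t' <= Rabs t)
    by (rewrite Ht', Rabs_mult, (Rabs_pos_eq lam) by lra; pose proof (Rabs_pos t); nra).
  assert (Htaylor' : Rabs (K (x + t') - K x - t' * L) <= C0 / 2 * Rabs t * Pg g (Rabs t)).
  { pose proof (taylor_dyadic_multiple x h n p Hx Hxh Hh Hxt') as Hmult. fold t' in Hmult.
    assert (0 <= Pg g (Rabs t')) by (apply Pg_nonneg; lra).
    assert (Pg g (Rabs t') <= Pg g (Rabs t)) by (apply Pg_le; auto; split; [apply Rabs_pos | lra]).
    assert (Rabs t' * Pg g (Rabs t') <= Rabs t * Pg g (Rabs t))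
      by (apply Rmult_le_compat; auto; apply Rabs_pos).
    rewrite !Rmult_assoc in Hmult |- *. eapply Rle_trans; [exact Hmult|].
    apply Rmult_le_compat_l; lra. }
  assert (Hcont_t : Rabs (K (x + t') - K (x + t)) < e / 2).
  { apply Hc; auto. replace (x + t' - (x + t)) with (- (t - t')) by ring.
    rewrite Rabs_Ropp. pose proof (Rmin_l d1 (e / (2 * (Rabs L + 1)))). fold delta in H. lra. }
  assert (Hslope_t : Rabs (t - t') * Rabs L <= e / 2).
  { pose proof (Rmin_r d1 (e / (2 * (Rabs L + 1)))). fold delta in H.
    assert (Rabs (t - t') * (Rabs L + 1) <= e / 2).
    { apply Rle_trans with (e / (2 * (Rabs L + 1)) * (Rabs L + 1)).
      - apply Rmult_le_compat_r; lra.
      - right; field; lra. }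
    pose proof (Rabs_pos (t - t')). nra. }
  replace (K (x + t) - K x - t * L)
    with (- (K (x + t') - K (x + t)) + (K (x + t') - K x - t' * L) - (t - t') * L) by ring.
  eapply Rle_trans; [apply Rabs_triang|]. rewrite Rabs_Ropp, Rabs_mult.
  eapply Rle_trans; [apply Rplus_le_compat_r, Rabs_triang|]. rewrite Rabs_Ropp.
  lra.
Qed.

(* Both one-sided expansions at [x], at the same scale [tau], combine into the symmetric
   second difference. *)
Lemma dyadic_slope_opposite_gap x h h' tau : Icc a b x -> Icc a b (x + h) -> Icc a b (x + h') ->
  0 < tau <= h -> tau <= - h' ->
  Rabs (dyadic_slope K x h - dyadic_slope K x h') <= C0 * (Zg g tau + Pg g tau).
Proof.
  intros Hx Hxh Hxh' Htau Htau'.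
  assert (Hxp : Icc a b (x + tau)).
  { replace (x + tau) with (x + (tau / h) * h) by (field; lra). apply Icc_convex; auto.
    split; [apply Rdiv_le_0_compat; lra|].
    apply Rmult_le_reg_r with h; [lra|]. unfold Rdiv. rewrite Rmult_assoc, Rinv_l by lra. lra. }
  assert (Hxm : Icc a b (x + - tau)).
  { replace (x + - tau) with (x + (tau / - h') * h') by (field; lra). apply Icc_convex; auto.
    split; [apply Rdiv_le_0_compat; lra|].
    apply Rmult_le_reg_r with (- h'); [lra|]. unfold Rdiv. rewrite Rmult_assoc, Rinv_l by lra. lra. }
  pose proof (taylor_same_side x h tau Hx Hxh ltac:(lra) Hxp ltac:(nra)) as A1.
  pose proof (taylor_same_side x h' (- tau) Hx Hxh' ltac:(lra) Hxm ltac:(nra)) as A2.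
  pose proof (second_diff_Rabs x tau Hxp Hxm) as A3.
  rewrite Rabs_Ropp in A2. rewrite (Rabs_pos_eq tau) in A1, A2, A3 by lra.
  replace (x + - tau) with (x - tau) in A2 by ring.
  assert (0 <= Pg g tau) by (apply Pg_nonneg; unfold Icc in *; lra).
  set (L1 := dyadic_slope K x h) in *. set (L2 := dyadic_slope K x h') in *.
  apply Rmult_le_reg_l with tau; [lra|].
  rewrite <- (Rabs_pos_eq tau) at 1 by lra. rewrite <- Rabs_mult.
  replace (tau * (L1 - L2)) with ((K (x + tau) + K (x - tau) - 2 * K x)
    - (K (x + tau) - K x - tau * L1) - (K (x - tau) - K x - - tau * L2)) by ring.
  unfold Rminus at 1 2. eapply Rle_trans; [apply Rabs_triang|].
  eapply Rle_trans; [apply Rplus_le_compat_r, Rabs_triang|]. rewrite !Rabs_Ropp.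
  lra.
Qed.

Lemma dyadic_slope_opposite x h h' : Icc a b x -> Icc a b (x + h) -> Icc a b (x + h') ->
  0 < h -> h' < 0 -> dyadic_slope K x h = dyadic_slope K x h'.
Proof.
  intros Hx Hxh Hxh' Hh Hh'.
  apply Rminus_diag_uniq, eq_0_of_Rabs_le_eps. intros e He.
  destruct (Zg_Pg_small g Hg (e / (2 * C0)) ltac:(apply Rdiv_lt_0_compat; lra)) as [d [Hd HZP]].
  pose proof (Rmin_l (Rmin h (- h')) d). pose proof (Rmin_r (Rmin h (- h')) d).
  pose proof (Rmin_l h (- h')). pose proof (Rmin_r h (- h')).
  set (m := Rmin (Rmin h (- h')) d) in *.
  assert (Hm : 0 < m) by (apply Rmin_pos; [apply Rmin_pos|]; lra).
  set (tau := m / 2).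
  assert (Htau : 0 < tau < m) by (unfold tau; lra).
  destruct (HZP tau ltac:(lra)) as [HZ HP].
  eapply Rle_trans; [apply (dyadic_slope_opposite_gap x h h' tau); auto; lra|].
  replace e with (C0 * (e / (2 * C0) + e / (2 * C0))) by (field; lra).
  apply Rmult_le_compat_l; lra.
Qed.

Definition dyadic_derivative (a b : R) (K : R -> R) x :=
  if Rle_dec x ((a + b) / 2) then dyadic_slope K x ((b - a) / 2)
  else dyadic_slope K x (- ((b - a) / 2)).

Hypothesis Hab : a < b.

Lemma taylor_dyadic_derivative x t : Icc a b x -> Icc a b (x + t) ->
  Rabs (K (x + t) - K x - t * dyadic_derivative a b K x) <= C0 / 2 * Rabs t * Pg g (Rabs t).
Proof.
  intros Hx Hxt.
  assert (Ht1 : Rabs t < 1) by (replace t with (x + t - x) by ring; apply (Rabs_lt_1_of_Icc a b); auto).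
  destruct (Req_dec t 0) as [->|Ht0].
  { rewrite Rplus_0_r, Rabs_R0. replace (K x - K x - 0 * _) with 0 by ring.
    rewrite Rabs_R0. unfold Pg. destruct (Rlt_dec 0 0); lra. }
  unfold dyadic_derivative. destruct (Rle_dec x ((a + b) / 2)).
  - assert (Hr : Icc a b (x + (b - a) / 2)) by (unfold Icc in *; lra).
    destruct (Rlt_dec 0 t).
    + apply (taylor_same_side x); auto; nra.
    + rewrite (dyadic_slope_opposite x ((b - a) / 2) t); auto; try lra.
      apply (taylor_same_side x); auto. nra.
  - assert (Hl : Icc a b (x + - ((b - a) / 2))) by (unfold Icc in *; lra).
    destruct (Rlt_dec 0 t).
    + rewrite <- (dyadic_slope_opposite x t (- ((b - a) / 2))); auto; try lra.
      apply (taylor_same_side x); auto. nra.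
    + apply (taylor_same_side x); auto; nra.
Qed.

Lemma slope_sub_dyadic_derivative x y : Icc a b x -> Icc a b y -> y <> x ->
  Rabs ((K y - K x) / (y - x) - dyadic_derivative a b K x) <= C0 / 2 * Pg g (Rabs (y - x)).
Proof.
  intros Hx Hy Hyx.
  assert (Hxy : Icc a b (x + (y - x))) by (replace (x + (y - x)) with y by ring; exact Hy).
  pose proof (taylor_dyadic_derivative x (y - x) Hx Hxy) as Ht.
  replace (x + (y - x)) with y in Ht by ring.
  assert (Hd : 0 < Rabs (y - x)) by (apply Rabs_pos_lt; lra).
  replace ((K y - K x) / (y - x) - dyadic_derivative a b K x)
    with ((K y - K x - (y - x) * dyadic_derivative a b K x) / (y - x)) by (field; lra).
  rewrite Rabs_div by lra.
  apply Rmult_le_reg_r with (Rabs (y - x)); [exact Hd|].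
  unfold Rdiv. rewrite Rmult_assoc, Rinv_l, Rmult_1_r by lra. lra.
Qed.

Lemma dyadic_derivative_modulus xi eta : Icc a b xi -> Icc a b eta ->
  Rabs (dyadic_derivative a b K xi - dyadic_derivative a b K eta)
    <= C0 * Pg g (Rabs (xi - eta)).
Proof.
  intros Hxi Heta.
  set (t := eta - xi).
  assert (Hxt : Icc a b (xi + t)) by (unfold t; replace (xi + (eta - xi)) with eta by ring; exact Heta).
  assert (Hyt : Icc a b (eta + - t)) by (unfold t; replace (eta + - (eta - xi)) with xi by ring; exact Hxi).
  pose proof (taylor_dyadic_derivative xi t Hxi Hxt) as H1.
  pose proof (taylor_dyadic_derivative eta (- t) Heta Hyt) as H2.
  replace (xi + t) with eta in H1 by (unfold t; ring).
  replace (eta + - t) with xi in H2 by (unfold t; ring).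
  rewrite Rabs_Ropp in H2.
  replace (Rabs (xi - eta)) with (Rabs t) by (unfold t; apply Rabs_minus_sym).
  destruct (Req_dec t 0) as [Ht0|Ht0].
  { assert (xi = eta) as -> by (unfold t in Ht0; lra).
    unfold Rminus. rewrite Rplus_opp_r, Rabs_R0.
    apply Rmult_le_pos; [lra | apply Pg_nonneg; auto; rewrite Ht0, Rabs_R0; lra]. }
  assert (Hat : 0 < Rabs t) by (apply Rabs_pos_lt, Ht0).
  apply Rmult_le_reg_l with (Rabs t); [exact Hat|].
  rewrite <- Rabs_mult.
  replace (t * (dyadic_derivative a b K xi - dyadic_derivative a b K eta))
    with (- (K eta - K xi - t * dyadic_derivative a b K xi)
          - (K xi - K eta - - t * dyadic_derivative a b K eta)) by ring.
  unfold Rminus at 1. eapply Rle_trans; [apply Rabs_triang|]. rewrite !Rabs_Ropp. lra.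
Qed.

End Zygmund_second_difference.

Theorem theorem2p3 (a b gamma : R) (K : R -> R) :
  a < b -> b - a < 1 -> 1 < gamma ->
  continuous_on_Icc a b K ->
  (exists C0 : R, 0 < C0 /\
     forall tau xi : R, 0 <= tau <= (b - a) / 2 ->
       Icc a b (xi + tau) -> Icc a b (xi - tau) ->
       Rabs (K (xi + tau) + K (xi - tau) - 2 * K xi) <= C0 * tau * Zg gamma tau) ->
  exists K' : R -> R,
    (forall x, Icc a b x -> has_derive_on_Icc a b K x (K' x)) /\
    continuous_on_Icc a b K' /\
    (exists C : R, 0 < C /\
       forall xi eta : R, Icc a b xi -> Icc a b eta ->
         Rabs (K' xi - K' eta) <= C * Pg gamma (Rabs (xi - eta))).
Proof.
  intros Hab Hba Hg Hcont [C0 [HC0 Hsecond]].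
  exists (dyadic_derivative a b K). split; [|split].
  - intros x Hx. apply filterlim_within_of_modulus with (w := fun t => C0 / 2 * Pg gamma t).
    + apply scal_Pg_small; lra.
    + intros y [Hy Hyx].
      exact (slope_sub_dyadic_derivative a b gamma C0 K Hg HC0 Hba Hsecond Hcont Hab x y Hx Hy Hyx).
  - intros x Hx. apply filterlim_within_of_modulus with (w := fun t => C0 * Pg gamma t).
    + apply scal_Pg_small; lra.
    + intros y Hy.
      exact (dyadic_derivative_modulus a b gamma C0 K Hg HC0 Hba Hsecond Hcont Hab y x Hy Hx).
  - exists C0. split; [exact HC0|]. intros xi eta Hxi Heta.
    exact (dyadic_derivative_modulus a b gamma C0 K Hg HC0 Hba Hsecond Hcont Hab xi eta Hxi Heta).
Qed.
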